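(* Let $(X,\mathcal{E})$ be an extremely normal ballean and let $\mathcal{E}'$ be a coarse structure on $X$ with $\mathcal{E}\subseteq\mathcal{E}'$ such that $(X,\mathcal{E}')$ is maximal. Then the bounded subsets of $(X,\mathcal{E})$ and of $(X,\mathcal{E}')$ coincide, and $\mathcal{E}'=\Uparrow\mathcal{B}_{(X,\mathcal{E})}$.
   Context: A ballean $(X,\mathcal{E})$ is a set with a coarse structure. $E[x]=\{y:(x,y)\in E\}$, $E[A]=\bigcup_{a\in A}E[a]$. $Y$ is bounded if $Y\subseteq E[x]$ for some $x$ and $E\in\mathcal{E}$; $\mathcal{B}_{(X,\mathcal{E})}$ denotes the family of bounded sets. $A$ is large if $X=E[A]$ for some $E\in\mathcal{E}$. An unbounded ballean is extremely normal if every unbounded subset is large, and maximal if $X$ is bounded in every coarse structure strictly containing $\mathcal{E}$. For a bornology $\mathcal{B}$ on $X$ (a family of subsets closed under finite unions and subsets with $\bigcup\mathcal{B}=X$), a coarse structure is compatible with $\mathcal{B}$ if its family of bounded sets equals $\mathcal{B}$; $\Uparrow\mathcal{B}$ denotes the largest coarse structure on $X$ compatible with $\mathcal{B}$ (generated by all $E\subseteq X\times X$ with $E=E^{-1}$, $\Delta_X\subseteq E$, and $E[B]\in\mathcal{B}$ for each $B\in\mathcal{B}$). *)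

From Stdlib Require Import Classical.
Set Implicit Arguments.

Section Coarse.
Variable X : Type.

Definition entourage := X -> X -> Prop.

Definition diag : entourage := fun x y => x = y.
Definition inv (E : entourage) : entourage := fun x y => E y x.
Definition rel_union (E F : entourage) : entourage := fun x y => E x y \/ F x y.
Definition comp (E F : entourage) : entourage :=
  fun x z => exists y, E x y /\ F y z.
Definition rel_sub (E F : entourage) : Prop := forall x y, E x y -> F x y.

Definition ball (E : entourage) (x : X) : X -> Prop := fun y => E x y.
Definition image (E : entourage) (A : X -> Prop) : X -> Prop :=
  fun y => exists a, A a /\ E a y.

Definition is_coarse (C : entourage -> Prop) : Prop :=
  C diag /\
  (forall E, C E -> rel_sub diag E) /\
  (forall E F, C E -> rel_sub diag F -> rel_sub F E -> C F) /\
  (forall E, C E -> C (inv E)) /\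
  (forall E F, C E -> C F -> C (rel_union E F)) /\
  (forall E F, C E -> C F -> C (comp E F)) /\
  (forall x y, exists E, C E /\ E x y).

Definition bounded (C : entourage -> Prop) (Y : X -> Prop) : Prop :=
  exists x E, C E /\ (forall y, Y y -> ball E x y).

Definition large (C : entourage -> Prop) (A : X -> Prop) : Prop :=
  exists E, C E /\ (forall z, image E A z).

Definition unbounded_ballean (C : entourage -> Prop) : Prop :=
  is_coarse C /\ ~ bounded C (fun _ => True).

Definition extremely_normal (C : entourage -> Prop) : Prop :=
  unbounded_ballean C /\
  (forall Y, ~ bounded C Y -> large C Y).

Definition maximal (C : entourage -> Prop) : Prop :=
  unbounded_ballean C /\
  (forall C', is_coarse C' -> (forall E, C E -> C' E) ->
     (exists E, C' E /\ ~ C E) -> bounded C' (fun _ => True)).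

Definition generated (G : entourage -> Prop) : entourage -> Prop :=
  fun E => forall C, is_coarse C -> (forall F, G F -> C F) -> C E.

(* generators of the largest coarse structure compatible with B *)
Definition uparrow_gen (B : (X -> Prop) -> Prop) (E : entourage) : Prop :=
  (forall x y, E x y <-> E y x) /\ rel_sub diag E /\
  (forall A, B A -> B (image E A)).

Definition uparrow (B : (X -> Prop) -> Prop) : entourage -> Prop :=
  generated (uparrow_gen B).

End Coarse.

(** The bornologies agree because a set that is bounded for [C'] but not for
    [C] would be [C]-large, hence [C']-large, and a bounded large set makes the
    whole space bounded.  The structure [uparrow (bounded C)] is a coarse
    structure compatible with [bounded C]: all its entourages map bounded sets
    to bounded sets, since the entourages doing so in both directions form a
    coarse structure containing its generators.  It contains [C'] (every
    [E] in [C'] lies in the generator [E ∪ E⁻¹]), so by maximality of [C'] it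
    cannot be strictly larger. *)

From Stdlib Require Import Classical.
Set Implicit Arguments.

Section Bornology.
Variable X : Type.
Implicit Types (C K : entourage X -> Prop) (E F : entourage X) (A Y : X -> Prop).

Lemma bounded_sub C Y Z : (forall y, Y y -> Z y) -> bounded C Z -> bounded C Y.
Proof. intros HYZ [x [E [HE HZ]]]. exists x, E. split; auto. Qed.

Lemma bounded_mono C K Y : (forall E, C E -> K E) -> bounded C Y -> bounded K Y.
Proof. intros HCK [x [E [HE HY]]]. exists x, E. auto. Qed.

Lemma bounded_point C x : is_coarse C -> bounded C (fun z => z = x).
Proof.
  intros [Cdiag _]. exists x, (@diag X). split; [exact Cdiag|].
  intros y ->. reflexivity.
Qed.

Lemma bounded_image C E A : is_coarse C -> C E -> bounded C A -> bounded C (image E A).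
Proof.
  intros [_ [_ [_ [_ [_ [Ccomp _]]]]]] HE [x [F [HF HA]]].
  exists x, (comp F E). split; [apply Ccomp; auto|].
  intros z [a [Ha Eaz]]. exists a. split; [apply HA|]; auto.
Qed.

Lemma bounded_union C A Y : is_coarse C -> bounded C A -> bounded C Y ->
  bounded C (fun z => A z \/ Y z).
Proof.
  intros [_ [_ [_ [_ [Cunion [Ccomp Ccover]]]]]] [x [E [HE HA]]] [y [F [HF HY]]].
  destruct (Ccover x y) as [H [HH Hxy]].
  exists x, (rel_union E (comp H F)). split; [apply Cunion, Ccomp; auto|].
  intros z [Az|Yz]; [left; apply HA | right; exists y; split; [|apply HY]]; auto.
Qed.

Lemma large_bounded_total C Y : is_coarse C -> large C Y -> bounded C Y ->
  bounded C (fun _ => True).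
Proof.
  intros [_ [_ [_ [_ [_ [Ccomp _]]]]]] [E [HE HYE]] [x [F [HF HY]]].
  exists x, (comp F E). split; [apply Ccomp; auto|].
  intros z _. destruct (HYE z) as [a [Ya Eaz]]. exists a. split; [apply HY|]; auto.
Qed.

Lemma bounded_of_unbounded_coarsening C C' Y :
  extremely_normal C -> is_coarse C' -> (forall E, C E -> C' E) ->
  ~ bounded C' (fun _ => True) -> bounded C' Y -> bounded C Y.
Proof.
  intros [_ HCnormal] HC' HCC' HC'unb HY. apply NNPP. intros HYunb.
  apply HC'unb, (large_bounded_total (Y := Y) HC'); auto.
  destruct (HCnormal Y HYunb) as [E [HE HYE]]. exists E. auto.
Qed.

Definition maps_bounded C E : Prop :=
  forall A, bounded C A -> bounded C (image E A).

(* The two-sided condition is needed: [maps_bounded] alone is not closed under inverses. *)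
Definition bornologous C E : Prop :=
  rel_sub (@diag X) E /\ maps_bounded C E /\ maps_bounded C (inv E).

Lemma maps_bounded_sub C E F : rel_sub F E -> maps_bounded C E -> maps_bounded C F.
Proof.
  intros HFE HE A HA. apply bounded_sub with (Z := image E A); auto.
  intros z [a [Ha Faz]]. exists a. auto.
Qed.

Lemma maps_bounded_diag C : maps_bounded C (@diag X).
Proof.
  intros A HA. apply bounded_sub with (Z := A); auto.
  intros z [a [Ha <-]]. exact Ha.
Qed.

Lemma maps_bounded_union C E F : is_coarse C ->
  maps_bounded C E -> maps_bounded C F -> maps_bounded C (rel_union E F).
Proof.
  intros HC HE HF A HA.
  apply bounded_sub with (Z := fun z => image E A z \/ image F A z);
    [|apply bounded_union; auto].
  intros z [a [Ha [Eaz|Faz]]]; [left|right]; exists a; auto.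
Qed.

Lemma maps_bounded_comp C E F :
  maps_bounded C E -> maps_bounded C F -> maps_bounded C (comp E F).
Proof.
  intros HE HF A HA. apply bounded_sub with (Z := image F (image E A)); auto.
  intros z [a [Ha [b [Eab Fbz]]]]. exists b. split; auto. exists a. auto.
Qed.

Lemma bornologous_of_coarse C E : is_coarse C -> C E -> bornologous C E.
Proof.
  intros HC HE. pose proof HC as [_ [Cref [_ [Cinv _]]]].
  split; [auto|split]; intros A; apply bounded_image; auto.
Qed.

Lemma bornologous_coarse C : is_coarse C -> is_coarse (bornologous C).
Proof.
  intros HC. pose proof HC as [_ [_ [_ [_ [_ [_ Ccover]]]]]].
  split; [|split; [|split; [|split; [|split; [|split]]]]].
  - split; [intros x y; auto|].
    split; apply maps_bounded_sub with (E := @diag X);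
      try apply maps_bounded_diag; intros x y; unfold inv, diag; auto.
  - intros E [Ediag _]. exact Ediag.
  - intros E F [_ [HE HEinv]] Fdiag HFE. split; [exact Fdiag|].
    split; [apply maps_bounded_sub with (E := E)
           |apply maps_bounded_sub with (E := inv E)]; auto.
    intros x y. apply HFE.
  - intros E [Ediag [HE HEinv]]. split; [|split; auto].
    intros x y <-. apply Ediag. reflexivity.
  - intros E F [Ediag [HE HEinv]] [_ [HF HFinv]].
    split; [intros x y Dxy; left; auto|].
    split; [apply maps_bounded_union; auto|].
    apply maps_bounded_sub with (E := rel_union (inv E) (inv F));
      [intros x y Hyx; exact Hyx | apply maps_bounded_union; auto].
  - intros E F [Ediag [HE HEinv]] [Fdiag [HF HFinv]]. split; [|split].
    + intros x y Dxy. exists y. split; [apply Ediag; auto | apply Fdiag; reflexivity].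
    + apply maps_bounded_comp; auto.
    + apply maps_bounded_sub with (E := comp (inv F) (inv E));
        [|apply maps_bounded_comp; auto].
      intros x z [y [Ezy Fyx]]. exists y. auto.
  - intros x y. destruct (Ccover x y) as [E [HE Exy]].
    exists E. split; auto. apply bornologous_of_coarse; auto.
Qed.

End Bornology.

Section Generated.
Variable X : Type.
Implicit Types (C K G : entourage X -> Prop) (E F : entourage X)
  (B : (X -> Prop) -> Prop).

Lemma generated_sub G K E :
  is_coarse K -> (forall F, G F -> K F) -> generated G E -> K E.
Proof. intros HK HGK HE. exact (HE K HK HGK). Qed.

Lemma generated_coarse G K :
  is_coarse K -> (forall F, G F -> K F) ->
  (forall x y, exists E, G E /\ E x y) -> is_coarse (generated G).
Proof.
  intros HK HGK Gcover.
  split; [|split; [|split; [|split; [|split; [|split]]]]].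
  - intros K' [K'diag _] _. exact K'diag.
  - intros E HE. pose proof HK as [_ [Kref _]]. apply Kref, (generated_sub HK HGK HE).
  - intros E F HE Fdiag HFE K' HK' HGK'. pose proof HK' as [_ [_ [K'sub _]]].
    exact (K'sub E F (HE K' HK' HGK') Fdiag HFE).
  - intros E HE K' HK' HGK'. pose proof HK' as [_ [_ [_ [K'inv _]]]].
    exact (K'inv E (HE K' HK' HGK')).
  - intros E F HE HF K' HK' HGK'. pose proof HK' as [_ [_ [_ [_ [K'union _]]]]].
    exact (K'union E F (HE K' HK' HGK') (HF K' HK' HGK')).
  - intros E F HE HF K' HK' HGK'. pose proof HK' as [_ [_ [_ [_ [_ [K'comp _]]]]]].
    exact (K'comp E F (HE K' HK' HGK') (HF K' HK' HGK')).
  - intros x y. destruct (Gcover x y) as [E [HE Exy]].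
    exists E. split; auto. intros K' _ HGK'. auto.
Qed.

Lemma uparrow_gen_symmetrization C B E :
  is_coarse C -> (forall A, B A <-> bounded C A) -> C E ->
  uparrow_gen B (rel_union E (inv E)).
Proof.
  intros HC HBC HE. pose proof HC as [_ [Cref [_ [Cinv [Cunion _]]]]].
  split; [|split].
  - intros x y. unfold rel_union, inv. tauto.
  - intros x y Dxy. left. apply (Cref E HE). exact Dxy.
  - intros A HA. apply HBC, bounded_image; auto. apply HBC. exact HA.
Qed.

Lemma coarse_sub_uparrow C B E :
  is_coarse C -> (forall A, B A <-> bounded C A) -> C E -> uparrow B E.
Proof.
  intros HC HBC HE K [_ [_ [Ksub _]]] HgenK. pose proof HC as [_ [Cref _]].
  apply (Ksub (rel_union E (inv E))).
  - apply HgenK, uparrow_gen_symmetrization with (C := C); auto.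
  - exact (Cref E HE).
  - intros x y Exy. left. exact Exy.
Qed.

Lemma uparrow_gen_bornologous C E :
  uparrow_gen (bounded C) E -> bornologous C E.
Proof.
  intros [Esym [Ediag HE]]. split; [exact Ediag|]. split; [exact HE|].
  apply maps_bounded_sub with (E := E); [|exact HE].
  intros x y Hyx. apply Esym. exact Hyx.
Qed.

Lemma uparrow_bornologous C E :
  is_coarse C -> uparrow (bounded C) E -> bornologous C E.
Proof.
  intros HC. apply generated_sub; [apply bornologous_coarse; auto|].
  intros F HF. apply uparrow_gen_bornologous. exact HF.
Qed.

Lemma uparrow_coarse C : is_coarse C -> is_coarse (uparrow (bounded C)).
Proof.
  intros HC. apply generated_coarse with (K := bornologous C).
  - apply bornologous_coarse. exact HC.
  - intros F HF. apply uparrow_gen_bornologous. exact HF.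
  - intros x y. pose proof HC as [_ [_ [_ [_ [_ [_ Ccover]]]]]].
    destruct (Ccover x y) as [E [HE Exy]].
    exists (rel_union E (inv E)). split; [|left; exact Exy].
    apply uparrow_gen_symmetrization with (C := C); auto. tauto.
Qed.

Lemma uparrow_unbounded C : is_coarse C -> ~ bounded C (fun _ => True) ->
  ~ bounded (uparrow (bounded C)) (fun _ => True).
Proof.
  intros HC HCunb [x [F [HF Hball]]]. apply HCunb.
  destruct (uparrow_bornologous HC HF) as [_ [HFmaps _]].
  apply bounded_sub with (Z := image F (fun z => z = x));
    [|apply HFmaps, bounded_point; exact HC].
  intros y _. exists x. split; [reflexivity | apply Hball; exact I].
Qed.

End Generated.

Theorem proposition1 (X : Type) (C C' : entourage X -> Prop) :
  extremely_normal C ->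
  is_coarse C' ->
  (forall E, C E -> C' E) ->
  maximal C' ->
  (forall Y : X -> Prop, bounded C Y <-> bounded C' Y) /\
  (forall E, C' E <-> uparrow (bounded C) E).
Proof.
  intros HCnormal HC' HCC' [[_ HC'unb] HC'max].
  pose proof HCnormal as [[HC HCunb] _].
  assert (Hbounded : forall Y, bounded C Y <-> bounded C' Y).
  { intros Y. split; [apply bounded_mono; exact HCC'|].
    apply bounded_of_unbounded_coarsening; auto. }
  split; [exact Hbounded|].
  intros E. split.
  - apply coarse_sub_uparrow; auto.
  - intros HE. apply NNPP. intros HE'.
    apply (uparrow_unbounded HC HCunb), HC'max.
    + apply uparrow_coarse. exact HC.
    + intros F. apply coarse_sub_uparrow; auto.
    + exists E. auto.
Qed.
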